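(* Let $A=(a_{n,k})$ be as described in the context. If $A$ satisfies the $MHBVS$ condition, then \[ \left|\sum_{k=0}^n a_{n,k}D_k(t)\right|=O\!\left(t^{-1}\,\overline{A}_{n,n-2\tau}\right), \] and if $A$ satisfies the $MRBVS$ condition, then \[ \left|\sum_{k=0}^n a_{n,k}D_k(t)\right|=O\!\left(t^{-1}A_{n,\tau}\right), \] for all $n=2,3,\dots$ and all $\frac{2\pi}{n}\le t\le\pi$, where $\tau=[\pi/t]$ (integer part), with $O$-constants independent of $n$ and $t$.
   Context: $A=(a_{n,k})$ is an infinite lower triangular real matrix with $a_{n,k}\ge0$ for $0\le k\le n$, $a_{n,k}=0$ for $k>n$, and $\sum_{k=0}^n a_{n,k}=1$ for every $n$. For $0\le m\le n$, $A_{n,m}=\sum_{k=0}^m a_{n,k}$ and $\overline A_{n,m}=\sum_{k=m}^n a_{n,k}$. $D_k(t)=\frac12+\sum_{\nu=1}^k\cos\nu t$ is the Dirichlet kernel. ''$A$ satisfies the $MRBVS$ condition'' means: there is a constant $K$ such that for all $n$ and all $0\le m<n$, $\sum_{k=m}^{n-1}|a_{n,k}-a_{n,k+1}|\le K\frac{1}{m+1}\sum_{m/2\le k\le m}a_{n,k}$. ''$A$ satisfies the $MHBVS$ condition'' means: there is a constant $K$ such that for all $n$ and all $0\le m<n$, $\sum_{k=0}^{n-m-1}|a_{n,k}-a_{n,k+1}|\le K\frac1{m+1}\sum_{k=n-m}^{n}a_{n,k}$. *)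

From Stdlib Require Import Reals Lra Lia List.
Import ListNotations.
Open Scope R_scope.

(* sumR f lo hi = sum_{k=lo}^{hi} f k  (empty, = 0, when hi < lo) *)
Definition sumR (f : nat -> R) (lo hi : nat) : R :=
  fold_right Rplus 0 (map f (seq lo (S hi - lo))).

Definition row_stochastic_lt (A : nat -> nat -> R) : Prop :=
  (forall n k, (k <= n)%nat -> 0 <= A n k) /\
  (forall n k, (n < k)%nat -> A n k = 0) /\
  (forall n, sumR (A n) 0 n = 1).

Definition Alow (A : nat -> nat -> R) (n m : nat) : R := sumR (A n) 0 m.
Definition Aup (A : nat -> nat -> R) (n m : nat) : R := sumR (A n) m n.

Definition Dir (k : nat) (t : R) : R :=
  / 2 + sumR (fun nu => cos (INR nu * t)) 1 k.

(* MRBVS: sum_{k=m}^{n-1} |a_{n,k}-a_{n,k+1}| <= K/(m+1) sum_{m/2<=k<=m} a_{n,k};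
   the naturals k with m/2 <= k are those with k >= (m+1)/2 (Nat division). *)
Definition MRBVS (A : nat -> nat -> R) : Prop :=
  exists K : R, forall n m : nat, (m < n)%nat ->
    sumR (fun k => Rabs (A n k - A n (S k))) m (n - 1)
    <= K * / INR (S m) * sumR (A n) ((m + 1) / 2) m.

Definition MHBVS (A : nat -> nat -> R) : Prop :=
  exists K : R, forall n m : nat, (m < n)%nat ->
    sumR (fun k => Rabs (A n k - A n (S k))) 0 (n - m - 1)
    <= K * / INR (S m) * sumR (A n) (n - m) n.

Definition tau (t : R) : nat := Z.to_nat (Int_part (PI / t)).

(* Write S_k(t) = sum_{j<k} D_j(t).  Since 2 sin(t/2) D_k(t) = sin((k+1/2)t) and
   4 sin^2(t/2) S_k(t) = 1 - cos(kt), we have D_k(t) = O(1/t) and S_k(t) = O(1/t^2).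
   The terms of the row carrying the mass A_{n,tau} (resp. the upper mass) are bounded
   directly by |D_k| = O(1/t); the remaining ones are summed by parts against S_k, which
   costs the variation of the row plus two boundary values.  The bounded-variation condition
   makes both O(mass / (tau + 1)), and 1/(tau + 1) <= t/pi turns O(1/t^2) into O(1/t). *)

From Stdlib Require Import Reals Lra Lia List.
Open Scope R_scope.

(* Unlike [sumR], the second bound is the number of terms, not the last index. *)
Definition sum_range (f : nat -> R) (lo c : nat) : R :=
  fold_right Rplus 0 (map f (seq lo c)).

Lemma sumR_sum_range f lo hi : sumR f lo hi = sum_range f lo (S hi - lo).
Proof. reflexivity. Qed.

Lemma sum_range_0 f lo : sum_range f lo 0 = 0.
Proof. reflexivity. Qed.

Lemma sum_range_succ f lo c : sum_range f lo (S c) = sum_range f lo c + f (lo + c)%nat.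
Proof.
  unfold sum_range. rewrite seq_S, map_app, fold_right_app; simpl.
  induction (map f (seq lo c)) as [|x l IH]; simpl; lra.
Qed.

Lemma sum_range_add f lo a b :
  sum_range f lo (a + b) = sum_range f lo a + sum_range f (lo + a) b.
Proof.
  induction b as [|b IH].
  - rewrite Nat.add_0_r, sum_range_0; lra.
  - rewrite Nat.add_succ_r, !sum_range_succ, IH, Nat.add_assoc; lra.
Qed.

Lemma sum_range_le f g lo c : (forall k, f k <= g k) -> sum_range f lo c <= sum_range g lo c.
Proof.
  intros Hfg; induction c as [|c IH]; [rewrite !sum_range_0; lra|].
  rewrite !sum_range_succ; specialize (Hfg (lo + c)%nat); lra.
Qed.

Lemma sum_range_nonneg f lo c : (forall k, 0 <= f k) -> 0 <= sum_range f lo c.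
Proof.
  intros Hf. rewrite <- (sum_range_0 f lo) at 1.
  induction c as [|c IH]; [lra|]. rewrite sum_range_succ; specialize (Hf (lo + c)%nat); lra.
Qed.

Lemma sum_range_plus f g lo c :
  sum_range (fun k => f k + g k) lo c = sum_range f lo c + sum_range g lo c.
Proof. induction c; [rewrite !sum_range_0|rewrite !sum_range_succ, IHc]; lra. Qed.

Lemma sum_range_scal r f lo c : sum_range (fun k => r * f k) lo c = r * sum_range f lo c.
Proof. induction c; [rewrite !sum_range_0|rewrite !sum_range_succ, IHc]; lra. Qed.

Lemma sum_range_const r lo c : sum_range (fun _ => r) lo c = INR c * r.
Proof. induction c; [rewrite sum_range_0; simpl|rewrite sum_range_succ, IHc, S_INR]; lra. Qed.

Lemma sum_range_abs_le f lo c : Rabs (sum_range f lo c) <= sum_range (fun k => Rabs (f k)) lo c.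
Proof.
  induction c as [|c IH]; [rewrite !sum_range_0, Rabs_R0; lra|].
  rewrite !sum_range_succ. pose proof (Rabs_triang (sum_range f lo c) (f (lo + c)%nat)). lra.
Qed.

Lemma sum_range_mul_abs_le u v B lo c : (forall k, Rabs (v k) <= B) ->
  Rabs (sum_range (fun k => u k * v k) lo c) <= B * sum_range (fun k => Rabs (u k)) lo c.
Proof.
  intros Hv. eapply Rle_trans; [apply sum_range_abs_le|].
  rewrite <- sum_range_scal. apply sum_range_le. intros k.
  rewrite Rabs_mult, Rmult_comm. apply Rmult_le_compat_r; [apply Rabs_pos|apply Hv].
Qed.

Lemma sum_range_subrange_le f lo c lo' c' : (forall k, 0 <= f k) ->
  (lo' <= lo)%nat -> (lo + c <= lo' + c')%nat -> sum_range f lo c <= sum_range f lo' c'.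
Proof.
  intros Hf H1 H2.
  replace c' with ((lo - lo') + c + (lo' + c' - lo - c))%nat by lia.
  rewrite !sum_range_add. replace (lo' + (lo - lo'))%nat with lo by lia.
  replace (lo + c)%nat with (lo' + (lo - lo' + c))%nat in H2 |- * by lia.
  pose proof (sum_range_nonneg f lo' (lo - lo') Hf).
  pose proof (sum_range_nonneg f (lo' + (lo - lo' + c)) (lo' + c' - lo - c) Hf). lra.
Qed.

Lemma sum_range_ge_const x f lo c : (forall k, (lo <= k < lo + c)%nat -> x <= f k) ->
  INR c * x <= sum_range f lo c.
Proof.
  induction c as [|c IH]; intros Hf; [rewrite sum_range_0; simpl; lra|].
  rewrite sum_range_succ, S_INR.
  assert (x <= f (lo + c)%nat) by (apply Hf; lia).
  assert (INR c * x <= sum_range f lo c) by (apply IH; intros; apply Hf; lia). lra.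
Qed.

Definition variation (a : nat -> R) (lo c : nat) : R :=
  sum_range (fun k => Rabs (a k - a (S k))) lo c.

Lemma variation_subrange_le a lo c lo' c' :
  (lo' <= lo)%nat -> (lo + c <= lo' + c')%nat -> variation a lo c <= variation a lo' c'.
Proof. intros; apply sum_range_subrange_le; auto; intros; apply Rabs_pos. Qed.

Lemma Rabs_sub_le_variation a lo c x y : (lo <= x <= y)%nat -> (y <= lo + c)%nat ->
  Rabs (a y - a x) <= variation a lo c.
Proof.
  intros Hx Hy.
  assert (Hstep : forall d, Rabs (a (x + d)%nat - a x) <= variation a x d).
  { induction d as [|d IH].
    - rewrite Nat.add_0_r, Rminus_diag, Rabs_R0. unfold variation; rewrite sum_range_0; lra.
    - unfold variation in *. rewrite sum_range_succ, Nat.add_succ_r.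
      replace (a (S (x + d)) - a x) with ((a (x + d)%nat - a x) + (a (S (x + d)) - a (x + d)%nat))
        by ring.
      rewrite (Rabs_minus_sym (a (x + d)%nat) (a (S (x + d)))).
      pose proof (Rabs_triang (a (x + d)%nat - a x) (a (S (x + d)) - a (x + d)%nat)). lra. }
  replace y with (x + (y - x))%nat by lia.
  eapply Rle_trans; [apply Hstep|apply variation_subrange_le; lia].
Qed.

Lemma le_mean_plus_variation a lo c x : (lo <= x <= lo + c)%nat ->
  a x <= / INR (S c) * sum_range a lo (S c) + variation a lo c.
Proof.
  intros Hx. set (V := variation a lo c).
  assert (Hmean : INR (S c) * a x <= sum_range (fun k => a k + V) lo (S c)).
  { apply sum_range_ge_const. intros k Hk.
    assert (Rabs (a x - a k) <= V).
    { destruct (Nat.le_ge_cases k x).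
      - apply Rabs_sub_le_variation; lia.
      - rewrite Rabs_minus_sym. apply Rabs_sub_le_variation; lia. }
    pose proof (Rle_abs (a x - a k)). lra. }
  rewrite sum_range_plus, sum_range_const in Hmean.
  assert (Hc : 0 < INR (S c)) by (apply lt_0_INR; lia).
  apply Rmult_le_reg_l with (INR (S c)); [exact Hc|].
  replace (INR (S c) * (/ INR (S c) * sum_range a lo (S c) + V))
    with (sum_range a lo (S c) + INR (S c) * V) by (field; lra).
  exact Hmean.
Qed.

Lemma abel_summation a D lo c :
  sum_range (fun k => a k * D k) lo c =
  sum_range (fun k => (a k - a (S k)) * sum_range D 0 (S k)) lo c
  + a (lo + c)%nat * sum_range D 0 (lo + c) - a lo * sum_range D 0 lo.
Proof.
  induction c as [|c IH].
  - rewrite !sum_range_0, Nat.add_0_r. ring.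
  - rewrite !sum_range_succ, IH, Nat.add_succ_r, (sum_range_succ D 0 (lo + c)). simpl. ring.
Qed.

Section KernelSums.

Variables (a D : nat -> R) (B1 B2 : R).
Hypothesis a_nonneg : forall k, 0 <= a k.
Hypothesis D_bound : forall k, Rabs (D k) <= B1.
Hypothesis D_partial_bound : forall k, Rabs (sum_range D 0 k) <= B2.

Lemma kernel_sum_le lo c :
  Rabs (sum_range (fun k => a k * D k) lo c) <= B1 * sum_range a lo c.
Proof.
  eapply Rle_trans; [apply sum_range_mul_abs_le, D_bound|].
  assert (0 <= B1) by (pose proof (Rabs_pos (D 0%nat)); pose proof (D_bound 0%nat); lra).
  apply Rmult_le_compat_l; auto.
  apply sum_range_le. intros k. rewrite Rabs_right; [lra|apply Rle_ge, a_nonneg].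
Qed.

Lemma kernel_sum_abel_le lo c :
  Rabs (sum_range (fun k => a k * D k) lo c)
  <= B2 * (variation a lo c + a (lo + c)%nat + a lo).
Proof.
  assert (HB2 : 0 <= B2)
    by (pose proof (Rabs_pos (sum_range D 0 0)); pose proof (D_partial_bound 0%nat); lra).
  assert (Hprod : forall j, Rabs (a j * sum_range D 0 j) <= B2 * a j).
  { intros j. rewrite Rabs_mult, Rabs_right by (apply Rle_ge, a_nonneg).
    rewrite Rmult_comm. apply Rmult_le_compat_r; auto. }
  assert (Hvar : Rabs (sum_range (fun k => (a k - a (S k)) * sum_range D 0 (S k)) lo c)
                 <= B2 * variation a lo c)
    by (apply sum_range_mul_abs_le; auto).
  rewrite abel_summation.
  pose proof (Hprod (lo + c)%nat). pose proof (Hprod lo).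
  set (V := sum_range (fun k => (a k - a (S k)) * sum_range D 0 (S k)) lo c) in *.
  set (P := a (lo + c)%nat * sum_range D 0 (lo + c)) in *.
  set (Q := a lo * sum_range D 0 lo) in *.
  pose proof (Rabs_triang (V + P) (- Q)). pose proof (Rabs_triang V P).
  rewrite Rabs_Ropp in *. unfold Rminus. lra.
Qed.

End KernelSums.

Lemma Rinv_INR_le_twice p q : (0 < p)%nat -> (p <= 2 * q)%nat -> / INR q <= 2 * / INR p.
Proof.
  intros Hp Hpq.
  assert (Hp' : 0 < INR p) by (apply lt_0_INR; lia).
  assert (Hq' : 0 < INR q) by (apply lt_0_INR; lia).
  assert (INR p <= 2 * INR q)
    by (replace 2 with (INR 2) by reflexivity; rewrite <- mult_INR; apply le_INR; lia).
  apply Rmult_le_reg_l with (INR p * INR q); [nra|].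
  replace (INR p * INR q * / INR q) with (INR p) by (field; lra).
  replace (INR p * INR q * (2 * / INR p)) with (2 * INR q) by (field; lra). lra.
Qed.

Section MHBVSRow.

Variables (a D : nat -> R) (n : nat) (K B1 B2 : R).
Hypothesis a_nonneg : forall k, 0 <= a k.
Hypothesis K_nonneg : 0 <= K.
Hypothesis mhbvs_row : forall m, (m < n)%nat ->
  variation a 0 (n - m) <= K * / INR (S m) * sum_range a (n - m) (S m).
Hypothesis D_bound : forall k, Rabs (D k) <= B1.
Hypothesis D_partial_bound : forall k, Rabs (sum_range D 0 k) <= B2.

Variable m : nat.
Hypothesis m_lt_n : (m < n)%nat.
Hypothesis double_m_le_n : (2 * m <= n)%nat.

Let p := (n - 2 * m)%nat.
Let X := sum_range a p (S n - p).

Lemma mhbvs_variation_le : variation a 0 (n - m) <= K * / INR (S m) * X.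
Proof.
  eapply Rle_trans; [apply mhbvs_row, m_lt_n|].
  apply Rmult_le_compat_l.
  - apply Rmult_le_pos; [exact K_nonneg|left; apply Rinv_0_lt_compat, lt_0_INR; lia].
  - apply sum_range_subrange_le; auto; unfold p; lia.
Qed.

Lemma mhbvs_left_value_le : a p <= (1 + K) * / INR (S m) * X.
Proof.
  eapply Rle_trans; [apply (le_mean_plus_variation a p m p); lia|].
  assert (sum_range a p (S m) <= X) by (apply sum_range_subrange_le; auto; unfold p; lia).
  assert (variation a p m <= variation a 0 (n - m)) by (apply variation_subrange_le; unfold p; lia).
  pose proof mhbvs_variation_le.
  assert (0 < / INR (S m)) by (apply Rinv_0_lt_compat, lt_0_INR; lia).
  nra.
Qed.

Lemma mhbvs_kernel_sum_le :
  Rabs (sum_range (fun k => a k * D k) 0 (S n)) <= B1 * X + B2 * ((2 + 4 * K) * / INR (S m)) * X.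
Proof.
  assert (HB2 : 0 <= B2)
    by (pose proof (Rabs_pos (sum_range D 0 0)); pose proof (D_partial_bound 0%nat); lra).
  replace (S n) with (p + (S n - p))%nat at 1 by (unfold p; lia).
  rewrite sum_range_add, Nat.add_0_l.
  pose proof (kernel_sum_abel_le a D B2 a_nonneg D_partial_bound 0 p) as Hhead.
  rewrite Nat.add_0_l in Hhead.
  pose proof (kernel_sum_le a D B1 a_nonneg D_bound p (S n - p)) as Htail. fold X in Htail.
  assert (Hvar : variation a 0 p <= variation a 0 (n - m))
    by (apply variation_subrange_le; unfold p; lia).
  assert (Ha0 : Rabs (a p - a 0%nat) <= variation a 0 p) by (apply Rabs_sub_le_variation; lia).
  rewrite Rabs_minus_sym in Ha0. pose proof (Rle_abs (a 0%nat - a p)).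
  pose proof mhbvs_variation_le. pose proof mhbvs_left_value_le.
  assert (Hhead' : Rabs (sum_range (fun k => a k * D k) 0 p)
                   <= B2 * ((2 + 4 * K) * / INR (S m) * X)).
  { eapply Rle_trans; [exact Hhead|]. apply Rmult_le_compat_l; [exact HB2|].
    replace ((2 + 4 * K) * / INR (S m) * X)
      with (2 * ((1 + K) * / INR (S m) * X) + 2 * (K * / INR (S m) * X)) by ring.
    lra. }
  pose proof (Rabs_triang (sum_range (fun k => a k * D k) 0 p)
                          (sum_range (fun k => a k * D k) p (S n - p))).
  rewrite Rmult_assoc. lra.
Qed.

End MHBVSRow.

Section MRBVSRow.

Variables (a D : nat -> R) (n : nat) (K B1 B2 : R).
Hypothesis a_nonneg : forall k, 0 <= a k.
Hypothesis a_after_row : a (S n) = 0.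
Hypothesis K_nonneg : 0 <= K.
Hypothesis mrbvs_row : forall m, (m < n)%nat ->
  variation a m (n - m) <= K * / INR (S m) * sum_range a ((m + 1) / 2) (S m - (m + 1) / 2).
Hypothesis D_bound : forall k, Rabs (D k) <= B1.
Hypothesis D_partial_bound : forall k, Rabs (sum_range D 0 k) <= B2.

Lemma mrbvs_variation_le m : (m < n)%nat ->
  variation a m (n - m) <= K * / INR (S m) * sum_range a 0 (S m).
Proof.
  intros Hm. eapply Rle_trans; [apply mrbvs_row, Hm|].
  apply Rmult_le_compat_l.
  - apply Rmult_le_pos; [exact K_nonneg|left; apply Rinv_0_lt_compat, lt_0_INR; lia].
  - pose proof (Nat.div_mod (m + 1) 2 ltac:(lia)).
    pose proof (Nat.mod_upper_bound (m + 1) 2 ltac:(lia)).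
    apply sum_range_subrange_le; auto; lia.
Qed.

(* The value a_m is controlled by the mean of a over [(m+1)/2, m] plus the variation there, and
   both are O(A_{n,m}/(m+1)) because that window has length about m/2. *)
Lemma mrbvs_value_le m : (m < n)%nat -> a m <= (2 + 2 * K) * / INR (S m) * sum_range a 0 (S m).
Proof.
  intros Hm. set (L := ((m + 1) / 2)%nat). set (Al := sum_range a 0 (S m)).
  assert (HL : (2 * L <= m + 1 <= 2 * L + 1)%nat)
    by (pose proof (Nat.div_mod (m + 1) 2 ltac:(lia));
        pose proof (Nat.mod_upper_bound (m + 1) 2 ltac:(lia)); lia).
  eapply Rle_trans; [apply (le_mean_plus_variation a L (m - L) m); lia|].
  assert (Hmean : sum_range a L (S (m - L)) <= Al) by (apply sum_range_subrange_le; auto; lia).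
  assert (Hvar : variation a L (m - L) <= K * / INR (S L) * Al).
  { eapply Rle_trans; [apply variation_subrange_le with (lo' := L) (c' := (n - L)%nat); lia|].
    eapply Rle_trans; [apply mrbvs_variation_le; lia|].
    apply Rmult_le_compat_l.
    - apply Rmult_le_pos; [exact K_nonneg|left; apply Rinv_0_lt_compat, lt_0_INR; lia].
    - apply sum_range_subrange_le; auto; lia. }
  assert (Hw1 : / INR (S (m - L)) <= 2 * / INR (S m)) by (apply Rinv_INR_le_twice; lia).
  assert (Hw2 : / INR (S L) <= 2 * / INR (S m)) by (apply Rinv_INR_le_twice; lia).
  assert (0 <= Al) by (apply sum_range_nonneg; auto).
  assert (0 <= sum_range a L (S (m - L))) by (apply sum_range_nonneg; auto).
  assert (0 <= / INR (S (m - L))) by (left; apply Rinv_0_lt_compat, lt_0_INR; lia).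
  assert (0 <= / INR (S L)) by (left; apply Rinv_0_lt_compat, lt_0_INR; lia).
  assert (/ INR (S (m - L)) * sum_range a L (S (m - L)) <= 2 * / INR (S m) * Al)
    by (apply Rmult_le_compat; auto).
  assert (K * / INR (S L) * Al <= K * (2 * / INR (S m)) * Al)
    by (apply Rmult_le_compat_r; auto; apply Rmult_le_compat_l; auto).
  replace ((2 + 2 * K) * / INR (S m) * Al)
    with (2 * / INR (S m) * Al + K * (2 * / INR (S m)) * Al) by ring.
  lra.
Qed.

Lemma mrbvs_kernel_sum_le m : (m < n)%nat ->
  Rabs (sum_range (fun k => a k * D k) 0 (S n))
  <= B1 * sum_range a 0 (S m) + B2 * ((4 + 6 * K) * / INR (S m)) * sum_range a 0 (S m).
Proof.
  intros Hm. set (Al := sum_range a 0 (S m)).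
  assert (HB2 : 0 <= B2)
    by (pose proof (Rabs_pos (sum_range D 0 0)); pose proof (D_partial_bound 0%nat); lra).
  replace (S n) with (m + (S n - m))%nat at 1 by lia.
  rewrite sum_range_add, Nat.add_0_l.
  assert (Hhead : Rabs (sum_range (fun k => a k * D k) 0 m) <= B1 * Al).
  { eapply Rle_trans; [apply (kernel_sum_le a D B1 a_nonneg D_bound)|].
    assert (0 <= B1) by (pose proof (Rabs_pos (D 0%nat)); pose proof (D_bound 0%nat); lra).
    apply Rmult_le_compat_l; auto. apply sum_range_subrange_le; auto; lia. }
  pose proof (kernel_sum_abel_le a D B2 a_nonneg D_partial_bound m (S n - m)) as Htail.
  replace (m + (S n - m))%nat with (S n) in Htail by lia.
  assert (Hvar_end : variation a m (S n - m) = variation a m (n - m) + a n).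
  { replace (S n - m)%nat with (S (n - m)) by lia. unfold variation.
    rewrite sum_range_succ. replace (m + (n - m))%nat with n by lia.
    rewrite a_after_row, Rminus_0_r, Rabs_right by (apply Rle_ge, a_nonneg). reflexivity. }
  assert (Han : Rabs (a n - a m) <= variation a m (n - m)) by (apply Rabs_sub_le_variation; lia).
  pose proof (Rle_abs (a n - a m)).
  pose proof (mrbvs_variation_le m Hm) as HE. pose proof (mrbvs_value_le m Hm) as Ham.
  fold Al in HE, Ham.
  assert (Htail' : Rabs (sum_range (fun k => a k * D k) m (S n - m))
                   <= B2 * ((4 + 6 * K) * / INR (S m) * Al)).
  { eapply Rle_trans; [exact Htail|]. apply Rmult_le_compat_l; [exact HB2|].
    replace ((4 + 6 * K) * / INR (S m) * Al)
      with (2 * ((2 + 2 * K) * / INR (S m) * Al) + 2 * (K * / INR (S m) * Al)) by ring.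
    lra. }
  pose proof (Rabs_triang (sum_range (fun k => a k * D k) 0 m)
                          (sum_range (fun k => a k * D k) m (S n - m))).
  rewrite Rmult_assoc. lra.
Qed.

End MRBVSRow.

Lemma sin_half_mul_Dir k t : 2 * sin (t / 2) * Dir k t = sin ((INR k + / 2) * t).
Proof.
  induction k as [|k IH].
  - unfold Dir; rewrite sumR_sum_range, sum_range_0. simpl.
    replace ((0 + / 2) * t) with (t / 2) by lra. field.
  - assert (Hsucc : Dir (S k) t = Dir k t + cos (INR (S k) * t)).
    { unfold Dir. rewrite !sumR_sum_range.
      replace (S (S k) - 1)%nat with (S (S k - 1)) by lia.
      rewrite sum_range_succ. replace (1 + (S k - 1))%nat with (S k) by lia. lra. }
    rewrite Hsucc, Rmult_plus_distr_l, IH.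
    set (x := INR (S k) * t).
    replace ((INR k + / 2) * t) with (x - t / 2) by (unfold x; rewrite S_INR; lra).
    replace ((INR (S k) + / 2) * t) with (x + t / 2) by (unfold x; lra).
    rewrite sin_plus, sin_minus. ring.
Qed.

Lemma Dir_partial_sum_identity k t :
  4 * sin (t / 2) ^ 2 * sum_range (fun j => Dir j t) 0 k = 1 - cos (INR k * t).
Proof.
  induction k as [|k IH].
  - rewrite sum_range_0. simpl. rewrite Rmult_0_l, cos_0. lra.
  - rewrite sum_range_succ, Nat.add_0_l.
    replace (4 * sin (t / 2) ^ 2 * (sum_range (fun j => Dir j t) 0 k + Dir k t))
      with (4 * sin (t / 2) ^ 2 * sum_range (fun j => Dir j t) 0 k
            + 2 * sin (t / 2) * (2 * sin (t / 2) * Dir k t)) by ring.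
    rewrite IH, sin_half_mul_Dir.
    set (x := (INR k + / 2) * t).
    replace (INR k * t) with (x - t / 2) by (unfold x; lra).
    replace (INR (S k) * t) with (x + t / 2) by (unfold x; rewrite S_INR; lra).
    rewrite cos_plus, cos_minus. ring.
Qed.

(* From the Taylor bound sin x >= x - x^3/6 at x = t/2 <= 2. *)
Lemma sin_half_ge t : 0 < t -> t <= PI -> t / 6 <= sin (t / 2).
Proof.
  intros Ht HtPI. pose proof PI_4.
  destruct (sin_bound (t / 2) 0 ltac:(lra) ltac:(lra)) as [Hlow _].
  unfold sin_approx, sin_term in Hlow. simpl in Hlow. unfold INR in Hlow. simpl in Hlow.
  assert (t / 2 * (t / 2) <= 4) by nra. nra.
Qed.

Lemma Dir_abs_le k t : 0 < t -> t <= PI -> Rabs (Dir k t) <= 3 / t.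
Proof.
  intros Ht HtPI. pose proof (sin_half_ge t Ht HtPI) as Hs.
  assert (HD : Dir k t = sin ((INR k + / 2) * t) / (2 * sin (t / 2)))
    by (rewrite <- sin_half_mul_Dir; field; lra).
  rewrite HD. unfold Rdiv. rewrite Rabs_mult, (Rabs_right (/ _))
    by (apply Rle_ge, Rlt_le, Rinv_0_lt_compat; lra).
  assert (Hsin : Rabs (sin ((INR k + / 2) * t)) <= 1) by apply Rabs_le, SIN_bound.
  assert (/ (2 * sin (t / 2)) <= 3 * / t).
  { apply Rmult_le_reg_l with (2 * sin (t / 2) * t); [nra|].
    replace (2 * sin (t / 2) * t * / (2 * sin (t / 2))) with t by (field; lra).
    replace (2 * sin (t / 2) * t * (3 * / t)) with (6 * sin (t / 2)) by (field; lra). lra. }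
  assert (0 < / (2 * sin (t / 2))) by (apply Rinv_0_lt_compat; lra).
  pose proof (Rabs_pos (sin ((INR k + / 2) * t))). nra.
Qed.

Lemma Dir_partial_sum_abs_le k t : 0 < t -> t <= PI ->
  Rabs (sum_range (fun j => Dir j t) 0 k) <= 18 / t ^ 2.
Proof.
  intros Ht HtPI. pose proof (sin_half_ge t Ht HtPI) as Hs.
  set (s := sin (t / 2)) in *.
  assert (Hs2 : 0 < s ^ 2) by (apply pow_lt; lra).
  assert (HS : sum_range (fun j => Dir j t) 0 k = (1 - cos (INR k * t)) * / (4 * s ^ 2))
    by (rewrite <- Dir_partial_sum_identity; fold s; field; lra).
  pose proof (COS_bound (INR k * t)).
  rewrite HS, Rabs_mult, Rabs_right, Rabs_right
    by (try apply Rle_ge, Rlt_le, Rinv_0_lt_compat; lra).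
  assert (/ (4 * s ^ 2) <= 9 * / t ^ 2).
  { assert (t * t <= 36 * (s * s)) by nra.
    apply Rmult_le_reg_l with (4 * s ^ 2 * t ^ 2); [apply Rmult_lt_0_compat; [lra|apply pow_lt; lra]|].
    replace (4 * s ^ 2 * t ^ 2 * / (4 * s ^ 2)) with (t ^ 2) by (field; lra).
    replace (4 * s ^ 2 * t ^ 2 * (9 * / t ^ 2)) with (36 * s ^ 2) by (field; lra). simpl. lra. }
  assert (0 < / (4 * s ^ 2)) by (apply Rinv_0_lt_compat; lra).
  unfold Rdiv. nra.
Qed.

Lemma tau_spec t : 0 < t -> INR (tau t) <= PI / t < INR (S (tau t)).
Proof.
  intros Ht. pose proof PI_RGT_0.
  assert (0 <= PI / t) by (unfold Rdiv; apply Rmult_le_pos; [lra|left; apply Rinv_0_lt_compat, Ht]).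
  destruct (base_Int_part (PI / t)) as [Hfloor Hfrac].
  assert (Hz : (-1 < Int_part (PI / t))%Z) by (apply lt_IZR; lra).
  assert (Htau : INR (tau t) = IZR (Int_part (PI / t)))
    by (unfold tau; rewrite INR_IZR_INZ, Znat.Z2Nat.id by lia; reflexivity).
  rewrite S_INR, Htau. lra.
Qed.

Lemma tau_admissible n t : (2 <= n)%nat -> 2 * PI / INR n <= t -> 0 < t /\ (2 * tau t <= n)%nat.
Proof.
  intros Hn Hlow. pose proof PI_RGT_0.
  assert (Hn' : 0 < INR n) by (apply lt_0_INR; lia).
  assert (Ht : 0 < t).
  { eapply Rlt_le_trans; [|exact Hlow]. unfold Rdiv.
    apply Rmult_lt_0_compat; [lra|apply Rinv_0_lt_compat, Hn']. }
  split; [exact Ht|]. destruct (tau_spec t Ht) as [Htau _].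
  assert (PI / t <= INR n / 2).
  { apply Rmult_le_reg_r with (2 * t / INR n); [unfold Rdiv; pose proof (Rinv_0_lt_compat _ Hn'); nra|].
    replace (PI / t * (2 * t / INR n)) with (2 * PI / INR n) by (field; lra).
    replace (INR n / 2 * (2 * t / INR n)) with t by (field; lra). exact Hlow. }
  apply INR_le. rewrite mult_INR. simpl. lra.
Qed.

Lemma Rinv_succ_tau_bounds t : 0 < t -> 0 <= / INR (S (tau t)) <= t / PI.
Proof.
  intros Ht. pose proof PI_RGT_0. destruct (tau_spec t Ht) as [_ Htau].
  split; [left; apply Rinv_0_lt_compat, lt_0_INR; lia|].
  assert (0 < PI / t) by (unfold Rdiv; apply Rmult_lt_0_compat; [lra|apply Rinv_0_lt_compat, Ht]).
  replace (t / PI) with (/ (PI / t)) by (field; lra).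
  apply Rinv_le_contravar; lra.
Qed.

Lemma kernel_bound_scale t w c X : 0 < t -> 0 <= w <= t / PI -> 0 <= c -> 0 <= X ->
  3 / t * X + 18 / t ^ 2 * (c * w) * X <= (3 + 18 * c / PI) * / t * X.
Proof.
  intros Ht Hw Hc HX. pose proof PI_RGT_0.
  assert (18 / t ^ 2 * (c * w) * X <= 18 / t ^ 2 * (c * (t / PI)) * X).
  { apply Rmult_le_compat_r; [exact HX|]. apply Rmult_le_compat_l.
    - unfold Rdiv. apply Rmult_le_pos; [lra|left; apply Rinv_0_lt_compat, pow_lt, Ht].
    - apply Rmult_le_compat_l; lra. }
  replace ((3 + 18 * c / PI) * / t * X) with (3 / t * X + 18 / t ^ 2 * (c * (t / PI)) * X)
    by (field; lra).
  lra.
Qed.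

Lemma MHBVS_rows A : (forall n k, 0 <= A n k) -> MHBVS A ->
  exists K, 0 <= K /\ forall n m, (m < n)%nat ->
    variation (A n) 0 (n - m) <= K * / INR (S m) * sum_range (A n) (n - m) (S m).
Proof.
  intros HA [K HK]. exists (Rabs K). split; [apply Rabs_pos|]. intros n m Hm.
  specialize (HK n m Hm). rewrite !sumR_sum_range in HK.
  replace (S (n - m - 1) - 0)%nat with (n - m)%nat in HK by lia.
  replace (S n - (n - m))%nat with (S m) in HK by lia.
  eapply Rle_trans; [exact HK|]. apply Rmult_le_compat_r; [apply sum_range_nonneg, HA|].
  apply Rmult_le_compat_r; [left; apply Rinv_0_lt_compat, lt_0_INR; lia|apply Rle_abs].
Qed.

Lemma MRBVS_rows A : (forall n k, 0 <= A n k) -> MRBVS A ->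
  exists K, 0 <= K /\ forall n m, (m < n)%nat ->
    variation (A n) m (n - m)
    <= K * / INR (S m) * sum_range (A n) ((m + 1) / 2) (S m - (m + 1) / 2).
Proof.
  intros HA [K HK]. exists (Rabs K). split; [apply Rabs_pos|]. intros n m Hm.
  specialize (HK n m Hm). rewrite !sumR_sum_range in HK.
  replace (S (n - 1) - m)%nat with (n - m)%nat in HK by lia.
  eapply Rle_trans; [exact HK|]. apply Rmult_le_compat_r; [apply sum_range_nonneg, HA|].
  apply Rmult_le_compat_r; [left; apply Rinv_0_lt_compat, lt_0_INR; lia|apply Rle_abs].
Qed.

Theorem lemma2 (A : nat -> nat -> R) (hA : row_stochastic_lt A) :
  (MHBVS A ->
   exists C : R, forall (n : nat) (t : R), (2 <= n)%nat ->
     2 * PI / INR n <= t -> t <= PI ->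
     Rabs (sumR (fun k => A n k * Dir k t) 0 n) <= C * / t * Aup A n (n - 2 * tau t))
  /\
  (MRBVS A ->
   exists C : R, forall (n : nat) (t : R), (2 <= n)%nat ->
     2 * PI / INR n <= t -> t <= PI ->
     Rabs (sumR (fun k => A n k * Dir k t) 0 n) <= C * / t * Alow A n (tau t)).
Proof.
  destruct hA as [A_nonneg_lower [A_upper _]].
  assert (A_nonneg : forall n k, 0 <= A n k).
  { intros n k. destruct (Nat.le_gt_cases k n); [auto|rewrite A_upper; [lra|lia]]. }
  split.
  - intros HM. destruct (MHBVS_rows A A_nonneg HM) as [K [HK0 HK]].
    exists (3 + 18 * (2 + 4 * K) / PI). intros n t Hn Hlow Hhigh.
    destruct (tau_admissible n t Hn Hlow) as [Ht Htau].
    unfold Aup. rewrite !sumR_sum_range, Nat.sub_0_r.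
    eapply Rle_trans.
    + apply (mhbvs_kernel_sum_le (A n) (fun k => Dir k t) n K (3 / t) (18 / t ^ 2) (A_nonneg n) HK0
        (HK n) (fun k => Dir_abs_le k t Ht Hhigh) (fun k => Dir_partial_sum_abs_le k t Ht Hhigh)
        (tau t)); lia.
    + apply kernel_bound_scale;
        [exact Ht|apply Rinv_succ_tau_bounds, Ht|lra|apply sum_range_nonneg, A_nonneg].
  - intros HR. destruct (MRBVS_rows A A_nonneg HR) as [K [HK0 HK]].
    exists (3 + 18 * (4 + 6 * K) / PI). intros n t Hn Hlow Hhigh.
    destruct (tau_admissible n t Hn Hlow) as [Ht Htau].
    unfold Alow. rewrite !sumR_sum_range, Nat.sub_0_r.
    eapply Rle_trans.
    + apply (mrbvs_kernel_sum_le (A n) (fun k => Dir k t) n K (3 / t) (18 / t ^ 2) (A_nonneg n)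
        (A_upper n (S n) (Nat.lt_succ_diag_r n)) HK0
        (HK n) (fun k => Dir_abs_le k t Ht Hhigh) (fun k => Dir_partial_sum_abs_le k t Ht Hhigh)
        (tau t)); lia.
    + apply kernel_bound_scale;
        [exact Ht|apply Rinv_succ_tau_bounds, Ht|lra|apply sum_range_nonneg, A_nonneg].
Qed.
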